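(* Let $(f,L)$ satisfy the usual conditions and suppose $S=S^{f,L}>0$. Let $L_0=\frac{\pi}{2\sqrt S}\vee1$, define $\tilde L(t)=L(t)$ if $L(t)\le L_0$ and $\tilde L(t)=L_0+(L(t)-L_0)e^{-(L(t)-L_0)^2}$ if $L(t)>L_0$, and $\tilde f(t)=f(t)+L(t)-\tilde L(t)$. Then the pair $(\tilde f,\tilde L)$ satisfies conditions (II), (III) and (IV), and $S^{\tilde f,\tilde L}\ge S^{f,L}/2>0$.
   Context: For twice continuously differentiable $g:[0,\infty)\to\mathbb R$ and $M:[0,\infty)\to(0,\infty)$ and a constant $r>0$, set $E^{g,M}(t)=|g'(t)|M(t)+\int_0^t|g''(s)|M(s)ds+\frac12|M'(t)|M(t)+\frac12\int_0^t|M''(s)|M(s)ds$ and $S^{g,M}=\liminf_{t\to\infty}\frac1t\int_0^t\big(r-\frac12 g'(s)^2-\frac{\pi^2}{8M(s)^2}+\frac{M'(s)}{2M(s)}\big)ds$. The pair $(g,M)$ satisfies the usual conditions if (I) $g(0)=0$; (II) $g$ and $M$ are twice continuously differentiable; (III) $E^{g,M}(t)/t\to0$ as $t\to\infty$; (IV) $S^{g,M}\in(-\infty,\infty)$. *)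

From Stdlib Require Import Reals.
From Coquelicot Require Import Coquelicot.
Open Scope R_scope.

Definition deriv_on (g g' : R -> R) : Prop :=
  forall t, 0 <= t ->
    filterlim (fun h => (g (t + h) - g t) / h)
      (within (fun h => h <> 0 /\ 0 <= t + h) (locally 0))
      (locally (g' t)).

Definition cont_on (g : R -> R) : Prop :=
  forall t, 0 <= t ->
    filterlim g (within (fun s => 0 <= s) (locally t)) (locally (g t)).

Definition C2_on (g g1 g2 : R -> R) : Prop :=
  deriv_on g g1 /\ deriv_on g1 g2 /\ cont_on g2.

(* E^{g,M}(t), written with g' = g1, g'' = g2, M' = M1, M'' = M2. *)
Definition E_fun (g1 g2 M M1 M2 : R -> R) (t : R) : R :=
  Rabs (g1 t) * M t + RInt (fun s => Rabs (g2 s) * M s) 0 t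
  + / 2 * Rabs (M1 t) * M t + / 2 * RInt (fun s => Rabs (M2 s) * M s) 0 t.

Definition E_vanishes (g1 g2 M M1 M2 : R -> R) : Prop :=
  filterlim (fun t => E_fun g1 g2 M M1 M2 t / t)
    (Rbar_locally p_infty) (locally 0).

Definition liminf_infty (h : R -> R) : Rbar :=
  Rbar_lub (fun y => exists T : R,
    y = Rbar_glb (fun z => exists t, T <= t /\ z = Finite (h t))).

(* S^{g,M}, written with g' = g1, M' = M1. *)
Definition S_val (r : R) (g1 M M1 : R -> R) : Rbar :=
  liminf_infty (fun t => / t * RInt (fun s =>
     r - / 2 * (g1 s) ^ 2 - PI ^ 2 / (8 * (M s) ^ 2) + M1 s / (2 * M s)) 0 t).

From Stdlib Require Import Reals Lra Psatz Classical.
From Coquelicot Require Import Coquelicot.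
Open Scope R_scope.

(* Write Lt = phi o L, where the cutoff phi is the identity up to L0 and above L0 stays in
   (L0, L0 + 1], with |phi'| <= 2 and |phi''| <= 20.  Then ft' = f' + (1 - phi'(L)) L' and
   every integrand of E for (ft, Lt) is bounded by a constant multiple of the integrands of E
   for (f, L) plus a multiple of L'^2; since (L' L)' = L'' L + L'^2, the integral of L'^2 is
   itself controlled by E, so E stays o(t).  In the integrand of S, the pi^2 term only changes
   where L > L0, and there it is at most pi^2/(8 L0^2) <= S/2; the change in the g'^2 and
   M'/(2M) terms is, up to integrands of E, the derivative of a function whose values are
   O(E(t) + L(t)) = o(t), using that E(t) = o(t) forces L(t) = o(t).  Hence the new lower
   limit is at least S - S/2; it is at most r because M'/(2M) = (ln M)'/2 with M bounded. *)

Definition deriv_filter (t : R) : (R -> Prop) -> Prop :=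
  within (fun h => h <> 0 /\ 0 <= t + h) (locally 0).

Definition halfline_nbhs (t : R) : (R -> Prop) -> Prop :=
  within (fun s => 0 <= s) (locally t).

#[local] Instance deriv_filter_filter t : Filter (deriv_filter t).
Proof. apply within_filter, locally_filter. Qed.

#[local] Instance halfline_nbhs_filter t : Filter (halfline_nbhs t).
Proof. apply within_filter, locally_filter. Qed.

Lemma filterlim_locally_Rabs {T} (F : (T -> Prop) -> Prop) {FF : Filter F}
    (u : T -> R) (a : R) :
  filterlim u F (locally a) <-> forall e, 0 < e -> F (fun x => Rabs (u x - a) < e).
Proof.
  rewrite filterlim_locally. split.
  - intros H e He. exact (H (mkposreal e He)).
  - intros H e. apply H, cond_pos.
Qed.

Lemma deriv_filterP t (P : R -> Prop) :
  deriv_filter t P <->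
  exists d, 0 < d /\ forall h, Rabs h < d -> h <> 0 -> 0 <= t + h -> P h.
Proof.
  split.
  - intros [e He]. exists e; split; [apply cond_pos|].
    intros h Hh Hh0 Hth. apply He; [|tauto].
    change (Rabs (h - 0) < e). rewrite Rminus_0_r. exact Hh.
  - intros [d [Hd H]]. exists (mkposreal d Hd). intros h Hh [Hh0 Hth].
    change (Rabs (h - 0) < d) in Hh. rewrite Rminus_0_r in Hh. auto.
Qed.

Lemma halfline_nbhsP t (P : R -> Prop) :
  halfline_nbhs t P <-> exists d, 0 < d /\ forall s, Rabs (s - t) < d -> 0 <= s -> P s.
Proof.
  split.
  - intros [e He]. exists e; split; [apply cond_pos|]. intros s Hs Hs0. exact (He s Hs Hs0).
  - intros [d [Hd H]]. exists (mkposreal d Hd). exact H.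
Qed.

Section FilterlimAlgebra.
Context {T : Type} (F : (T -> Prop) -> Prop) {FF : Filter F}.

Lemma filterlim_fun_plus (u v : T -> R) a b :
  filterlim u F (locally a) -> filterlim v F (locally b) ->
  filterlim (fun x => u x + v x) F (locally (a + b)).
Proof. intros Hu Hv. eapply filterlim_comp_2; [exact Hu|exact Hv|apply (filterlim_plus a b)]. Qed.

Lemma filterlim_fun_mult (u v : T -> R) a b :
  filterlim u F (locally a) -> filterlim v F (locally b) ->
  filterlim (fun x => u x * v x) F (locally (a * b)).
Proof. intros Hu Hv. eapply filterlim_comp_2; [exact Hu|exact Hv|apply (filterlim_mult a b)]. Qed.

Lemma filterlim_fun_opp (u : T -> R) a :
  filterlim u F (locally a) -> filterlim (fun x => - u x) F (locally (- a)).
Proof. intros Hu. eapply filterlim_comp; [exact Hu|apply (filterlim_opp a)]. Qed.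

Lemma filterlim_fun_minus (u v : T -> R) a b :
  filterlim u F (locally a) -> filterlim v F (locally b) ->
  filterlim (fun x => u x - v x) F (locally (a - b)).
Proof. intros Hu Hv. apply filterlim_fun_plus, filterlim_fun_opp; assumption. Qed.

End FilterlimAlgebra.

(** * Calculus on the half-line *)

Lemma deriv_on_shift_cont g g' t : deriv_on g g' -> 0 <= t ->
  filterlim (fun h => g (t + h)) (deriv_filter t) (locally (g t)).
Proof.
  intros Hd Ht.
  assert (Hh : filterlim (fun h : R => h) (deriv_filter t) (locally 0)).
  { apply filterlim_locally_Rabs; [apply deriv_filter_filter|]. intros e He.
    apply deriv_filterP. exists e; split; [exact He|].
    intros h Hh _ _. rewrite Rminus_0_r. exact Hh. }
  assert (H := filterlim_fun_plus _ _ _ _ _ (filterlim_const (g t))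
                 (filterlim_fun_mult _ _ _ _ _ Hh (Hd t Ht))).
  rewrite Rmult_0_l, Rplus_0_r in H.
  eapply filterlim_within_ext; [|exact H]. intros h [Hh0 _]. field. exact Hh0.
Qed.

Lemma deriv_on_cont_on g g' : deriv_on g g' -> cont_on g.
Proof.
  intros Hd t Ht. apply filterlim_locally_Rabs; [apply halfline_nbhs_filter|]. intros e He.
  pose proof (proj1 (filterlim_locally_Rabs _ _ _) (deriv_on_shift_cont g g' t Hd Ht) e He)
    as Hnear.
  apply deriv_filterP in Hnear as [d [Hd0 Hnear]].
  apply halfline_nbhsP. exists d; split; [exact Hd0|]. intros s Hs Hs0.
  destruct (Req_dec s t) as [->|Hne]; [rewrite Rminus_diag, Rabs_R0; exact He|].
  replace s with (t + (s - t)) by ring. apply Hnear; [exact Hs|lra|lra].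
Qed.

Lemma deriv_on_plus u u' v v' : deriv_on u u' -> deriv_on v v' ->
  deriv_on (fun s => u s + v s) (fun s => u' s + v' s).
Proof.
  intros Hu Hv t Ht.
  eapply filterlim_ext; [|apply (filterlim_fun_plus _ _ _ _ _ (Hu t Ht) (Hv t Ht))].
  intros h. unfold Rdiv. ring.
Qed.

Lemma deriv_on_minus u u' v v' : deriv_on u u' -> deriv_on v v' ->
  deriv_on (fun s => u s - v s) (fun s => u' s - v' s).
Proof.
  intros Hu Hv t Ht.
  eapply filterlim_ext; [|apply (filterlim_fun_minus _ _ _ _ _ (Hu t Ht) (Hv t Ht))].
  intros h. unfold Rdiv. ring.
Qed.

Lemma deriv_on_mult u u' v v' : deriv_on u u' -> deriv_on v v' ->
  deriv_on (fun s => u s * v s) (fun s => u' s * v s + u s * v' s).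
Proof.
  intros Hu Hv t Ht.
  assert (H := filterlim_fun_plus _ _ _ _ _
     (filterlim_fun_mult _ _ _ _ _ (Hu t Ht) (filterlim_const (v t)))
     (filterlim_fun_mult _ _ _ _ _ (deriv_on_shift_cont u u' t Hu Ht) (Hv t Ht))).
  eapply filterlim_ext; [|exact H]. intros h. unfold Rdiv. ring.
Qed.

Lemma deriv_on_scal c u u' : deriv_on u u' -> deriv_on (fun s => c * u s) (fun s => c * u' s).
Proof.
  intros Hu t Ht.
  eapply filterlim_ext; [|apply (filterlim_fun_mult _ _ _ _ _ (filterlim_const c) (Hu t Ht))].
  intros h. unfold Rdiv. ring.
Qed.

Lemma deriv_on_comp (psi psi' : R -> R) g g' :
  (forall t, 0 <= t -> is_derive psi (g t) (psi' (g t))) -> deriv_on g g' ->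
  deriv_on (fun s => psi (g s)) (fun s => psi' (g s) * g' s).
Proof.
  intros Hpsi Hd t Ht. set (y0 := g t).
  (* Caratheodory: the difference quotient at y0, completed by psi' y0, is continuous at y0. *)
  set (Q := fun y => if Req_EM_T y y0 then psi' y0 else (psi y - psi y0) / (y - y0)).
  assert (HQ : continuous Q y0).
  { apply filterlim_locally_Rabs; [apply locally_filter|]. intros e He.
    destruct (proj1 (is_derive_Reals _ _ _) (Hpsi t Ht) e He) as [d Hd1].
    exists d. intros y Hy. unfold Q.
    destruct (Req_EM_T y0 y0) as [_|C]; [|congruence].
    destruct (Req_EM_T y y0) as [->|Ne]; [rewrite Rminus_diag, Rabs_R0; exact He|].
    change (Rabs (y - y0) < d) in Hy.
    specialize (Hd1 (y - y0) ltac:(lra) Hy). rewrite Rplus_minus in Hd1. exact Hd1. }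
  assert (H := filterlim_fun_mult _ _ _ _ _
                 (filterlim_comp _ _ _ _ _ _ _ _ (deriv_on_shift_cont g g' t Hd Ht) HQ) (Hd t Ht)).
  replace (Q y0) with (psi' y0) in H by (unfold Q; destruct (Req_EM_T y0 y0); congruence).
  eapply filterlim_within_ext; [|exact H]. intros h [Hh _]. unfold Q.
  destruct (Req_EM_T (g (t + h)) y0) as [E|Ne].
  - rewrite E. unfold y0, Rdiv. ring.
  - unfold y0 in *. field. split; [exact Hh|lra].
Qed.

Lemma cont_on_plus u v : cont_on u -> cont_on v -> cont_on (fun s => u s + v s).
Proof.
  intros Hu Hv t Ht. apply filterlim_fun_plus; [apply halfline_nbhs_filter|apply Hu|apply Hv]; auto.
Qed.

Lemma cont_on_minus u v : cont_on u -> cont_on v -> cont_on (fun s => u s - v s).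
Proof.
  intros Hu Hv t Ht. apply filterlim_fun_minus; [apply halfline_nbhs_filter|apply Hu|apply Hv]; auto.
Qed.

Lemma cont_on_mult u v : cont_on u -> cont_on v -> cont_on (fun s => u s * v s).
Proof.
  intros Hu Hv t Ht. apply filterlim_fun_mult; [apply halfline_nbhs_filter|apply Hu|apply Hv]; auto.
Qed.

Lemma cont_on_const c : cont_on (fun _ => c).
Proof. intros t Ht. apply filterlim_const. Qed.

Lemma cont_on_comp (psi : R -> R) g :
  (forall t, 0 <= t -> continuous psi (g t)) -> cont_on g -> cont_on (fun s => psi (g s)).
Proof. intros Hpsi Hg t Ht. eapply filterlim_comp; [apply Hg|apply Hpsi]; auto. Qed.

Lemma cont_on_opp u : cont_on u -> cont_on (fun s => - u s).
Proof.
  apply (cont_on_comp Ropp). intros t _.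
  apply (ex_derive_continuous Ropp). auto_derive. exact I.
Qed.

Lemma cont_on_abs u : cont_on u -> cont_on (fun s => Rabs (u s)).
Proof. apply cont_on_comp. intros t _. apply continuous_Rabs. Qed.

Lemma cont_on_pow2 u : cont_on u -> cont_on (fun s => u s ^ 2).
Proof.
  apply (cont_on_comp (fun x => x ^ 2)). intros t _.
  apply (ex_derive_continuous (fun x => x ^ 2)). auto_derive. exact I.
Qed.

Lemma cont_on_inv u : (forall t, 0 <= t -> u t <> 0) -> cont_on u -> cont_on (fun s => / u s).
Proof. intros Hu. apply cont_on_comp. intros t Ht. apply continuous_Rinv, Hu, Ht. Qed.

Lemma cont_on_div u v : (forall t, 0 <= t -> v t <> 0) -> cont_on u -> cont_on v ->
  cont_on (fun s => u s / v s).
Proof. intros Hv Hu Hv'. apply cont_on_mult; [exact Hu|apply cont_on_inv; assumption]. Qed.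

Ltac solve_cont_on :=
  repeat match goal with
  | |- cont_on (fun s => _ - _) => apply cont_on_minus
  | |- cont_on (fun s => _ + _) => apply cont_on_plus
  | |- cont_on (fun s => - _) => apply cont_on_opp
  | |- cont_on (fun s => _ * _) => apply cont_on_mult
  | |- cont_on (fun s => _ / _) => apply cont_on_div
  | |- cont_on (fun s => / _) => apply cont_on_inv
  | |- cont_on (fun s => Rabs _) => apply cont_on_abs
  | |- cont_on (fun s => _ ^ 2) => apply cont_on_pow2
  | |- cont_on (fun _ => ?c) => apply cont_on_const
  | |- cont_on _ => assumption
  | |- forall t, _ -> _ <> 0 => let t := fresh "t" in intros t ?; cbv beta; solve [auto]
  end.

Lemma cont_on_continuous_extension h z : cont_on h -> 0 <= z ->
  continuous (fun y => h (Rmax 0 y)) z.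
Proof.
  intros Hh Hz. apply filterlim_locally_Rabs; [apply locally_filter|]. intros e He.
  pose proof (proj1 (filterlim_locally_Rabs _ _ _) (Hh z Hz) e He) as Hnear.
  apply halfline_nbhsP in Hnear as [d [Hd Hnear]].
  exists (mkposreal d Hd). intros y Hy. change (Rabs (y - z) < d) in Hy.
  rewrite (Rmax_right 0 z Hz). apply Hnear; [|apply Rmax_l].
  unfold Rmax; destruct (Rle_dec 0 y); [exact Hy|].
  revert Hy. unfold Rabs; destruct (Rcase_abs _); destruct (Rcase_abs _); lra.
Qed.

Lemma ex_RInt_cont_on h a b : cont_on h -> 0 <= a -> a <= b -> ex_RInt h a b.
Proof.
  intros Hh Ha Hab. apply (ex_RInt_ext (fun y => h (Rmax 0 y))).
  - intros x Hx. rewrite Rmin_left, Rmax_right in Hx by lra. rewrite Rmax_right; [reflexivity|lra].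
  - apply (@ex_RInt_continuous R_CompleteNormedModule). intros z Hz.
    rewrite Rmin_left, Rmax_right in Hz by lra. apply cont_on_continuous_extension; [exact Hh|lra].
Qed.

(* Extending [g] affinely to the left of 0 turns the one-sided derivative at 0 into a
   two-sided one. *)
Lemma deriv_on_is_derive_extension g g' x : deriv_on g g' -> 0 <= x ->
  is_derive (fun y => if Rle_dec 0 y then g y else g 0 + g' 0 * y) x (g' x).
Proof.
  intros Hd Hx. apply is_derive_Reals. intros e He.
  pose proof (proj1 (filterlim_locally_Rabs _ _ _) (Hd x Hx) e He) as Hnear.
  apply deriv_filterP in Hnear as [d [Hd0 Hnear]].
  destruct Hx as [Hxp| <-].
  - exists (mkposreal (Rmin d x) (Rmin_pos _ _ Hd0 Hxp)). intros h Hh0 Hh. simpl in Hh.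
    pose proof (Rmin_l d x). pose proof (Rmin_r d x). pose proof (Rle_abs (- h)).
    rewrite Rabs_Ropp in *.
    destruct (Rle_dec 0 (x + h)); destruct (Rle_dec 0 x); try lra.
    apply Hnear; lra.
  - exists (mkposreal d Hd0). intros h Hh0 Hh. simpl in Hh.
    destruct (Rle_dec 0 (0 + h)); destruct (Rle_dec 0 0); try lra.
    + apply Hnear; assumption.
    + replace ((g 0 + g' 0 * (0 + h) - g 0) / h - g' 0) with 0 by (field; exact Hh0).
      rewrite Rabs_R0. exact He.
Qed.

Lemma RInt_deriv_on g g' a b : deriv_on g g' -> cont_on g' -> 0 <= a -> a <= b ->
  RInt g' a b = g b - g a.
Proof.
  intros Hd Hc Ha Hab.
  set (ge := fun y => if Rle_dec 0 y then g y else g 0 + g' 0 * y).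
  assert (HI : is_RInt (fun y => g' (Rmax 0 y)) a b (minus (ge b) (ge a))).
  { apply (@is_RInt_derive R_CompleteNormedModule).
    - intros x Hx. rewrite Rmin_left, Rmax_right in Hx by lra.
      cbv beta. rewrite Rmax_right by lra. apply deriv_on_is_derive_extension; [exact Hd|lra].
    - intros x Hx. rewrite Rmin_left, Rmax_right in Hx by lra.
      apply cont_on_continuous_extension; [exact Hc|lra]. }
  apply is_RInt_unique. unfold ge in HI.
  destruct (Rle_dec 0 b); destruct (Rle_dec 0 a); try lra.
  eapply is_RInt_ext; [|exact HI]. intros x Hx.
  rewrite Rmin_left, Rmax_right in Hx by lra. cbv beta. rewrite Rmax_right by lra. reflexivity.
Qed.

Section IntegralsOnHalfline.
Variables (a b : R).
Hypotheses (Ha : 0 <= a) (Hab : a <= b).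

Lemma RInt_plus_on u v : cont_on u -> cont_on v ->
  RInt (fun s => u s + v s) a b = RInt u a b + RInt v a b.
Proof. intros. apply (RInt_plus u v); apply ex_RInt_cont_on; assumption. Qed.

Lemma RInt_minus_on u v : cont_on u -> cont_on v ->
  RInt (fun s => u s - v s) a b = RInt u a b - RInt v a b.
Proof. intros. apply (RInt_minus u v); apply ex_RInt_cont_on; assumption. Qed.

Lemma RInt_scal_on c u : cont_on u -> RInt (fun s => c * u s) a b = c * RInt u a b.
Proof. intros. apply (RInt_scal u); apply ex_RInt_cont_on; assumption. Qed.

Lemma RInt_le_on u v : cont_on u -> cont_on v ->
  (forall s, a <= s <= b -> u s <= v s) -> RInt u a b <= RInt v a b.
Proof.
  intros Hu Hv Huv. apply RInt_le; try apply ex_RInt_cont_on; try assumption.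
  intros x Hx. apply Huv. lra.
Qed.

Lemma RInt_ge0_on u : cont_on u -> (forall s, a <= s <= b -> 0 <= u s) -> 0 <= RInt u a b.
Proof.
  intros Hu Hpos. apply RInt_ge_0; try apply ex_RInt_cont_on; try assumption.
  intros x Hx. apply Hpos. lra.
Qed.

End IntegralsOnHalfline.

Lemma RInt_const_R c a b : RInt (fun _ => c) a b = c * (b - a).
Proof. rewrite RInt_const. simpl. change (scal (b - a) c) with ((b - a) * c). ring. Qed.

(** * Lower limits at infinity *)

Definition tail_inf (h : R -> R) (T : R) : Rbar :=
  Rbar_glb (fun z => exists t, T <= t /\ z = Finite (h t)).

Lemma liminf_infty_tail_inf h : liminf_infty h = Rbar_lub (fun y => exists T, y = tail_inf h T).
Proof. reflexivity. Qed.

Lemma tail_inf_le h T t : T <= t -> Rbar_le (tail_inf h T) (h t).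
Proof.
  intros Ht. unfold tail_inf, Rbar_glb. destruct (Rbar_ex_glb _) as [g Hg]. simpl.
  apply (proj1 Hg). exists t. auto.
Qed.

Lemma tail_inf_ge h T m : (forall t, T <= t -> m <= h t) -> Rbar_le m (tail_inf h T).
Proof.
  intros Hm. unfold tail_inf, Rbar_glb. destruct (Rbar_ex_glb _) as [g Hg]. simpl.
  apply (proj2 Hg (Finite m)). intros x [t [Ht ->]]. apply Hm, Ht.
Qed.

Lemma liminf_infty_eventually_ge h l : liminf_infty h = Finite l ->
  forall e, 0 < e -> Rbar_locally p_infty (fun t => l - e <= h t).
Proof.
  rewrite liminf_infty_tail_inf. unfold Rbar_lub.
  destruct (Rbar_ex_lub _) as [l' Hl']. simpl. intros -> e He.
  apply NNPP. intros Hn.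
  assert (Hbound : Rbar_is_upper_bound (fun y => exists T, y = tail_inf h T) (Finite (l - e))).
  { intros y [T ->].
    destruct (not_all_ex_not _ _ (not_ex_all_not _ _ Hn T)) as [t Ht].
    destruct (imply_to_and _ _ Ht) as [HTt Hlt].
    eapply Rbar_le_trans; [apply (tail_inf_le h T t); lra|]. simpl. lra. }
  pose proof (proj2 Hl' _ Hbound). simpl in *. lra.
Qed.

Lemma liminf_infty_ge h m :
  (forall e, 0 < e -> Rbar_locally p_infty (fun t => m - e <= h t)) ->
  Rbar_le m (liminf_infty h).
Proof.
  intros Hm. rewrite liminf_infty_tail_inf. unfold Rbar_lub.
  destruct (Rbar_ex_lub _) as [l Hl]. simpl.
  assert (K : forall e, 0 < e -> Rbar_le (m - e) l).
  { intros e He. destruct (Hm e He) as [T HT].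
    eapply Rbar_le_trans; [apply (tail_inf_ge h (T + 1))|].
    - intros t Ht. apply HT. lra.
    - apply (proj1 Hl). exists (T + 1). reflexivity. }
  destruct l as [l| |]; simpl; auto.
  - apply Rnot_lt_le. intros C. specialize (K ((m - l) / 2) ltac:(lra)). simpl in K. lra.
  - exact (K 1 Rlt_0_1).
Qed.

Lemma liminf_infty_le h m :
  (forall e, 0 < e -> Rbar_locally p_infty (fun t => h t <= m + e)) ->
  Rbar_le (liminf_infty h) m.
Proof.
  intros Hm. rewrite liminf_infty_tail_inf. unfold Rbar_lub.
  destruct (Rbar_ex_lub _) as [l Hl]. simpl.
  assert (K : forall e, 0 < e -> Rbar_le l (m + e)).
  { intros e He. destruct (Hm e He) as [T0 HT]. apply (proj2 Hl).
    intros y [T ->]. eapply Rbar_le_trans; [apply (tail_inf_le h T (Rmax T (T0 + 1))), Rmax_l|].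
    simpl. apply HT. pose proof (Rmax_r T (T0 + 1)). lra. }
  destruct l as [l| |]; simpl; auto.
  - apply Rnot_lt_le. intros C. specialize (K ((l - m) / 2) ltac:(lra)). simpl in K. lra.
  - exact (K 1 Rlt_0_1).
Qed.

Lemma liminf_infty_ge_perturbed h g u l c :
  liminf_infty h = Finite l -> is_lim u p_infty 0 ->
  Rbar_locally p_infty (fun t => h t - c - u t <= g t) ->
  Rbar_le (l - c) (liminf_infty g).
Proof.
  intros Hh Hu Hhg. apply liminf_infty_ge. intros e He.
  apply is_lim_spec in Hu. specialize (Hu (mkposreal (e / 2) ltac:(lra))).
  generalize (filter_and _ _ (filter_and _ _ Hu Hhg)
                (liminf_infty_eventually_ge h l Hh (e / 2) ltac:(lra))).
  apply filter_imp. intros t [[Hut Hgt] Hht]. simpl in Hut.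
  rewrite Rminus_0_r in Hut. pose proof (Rle_abs (u t)). lra.
Qed.

Lemma liminf_infty_le_perturbed g u m :
  is_lim u p_infty 0 -> Rbar_locally p_infty (fun t => g t <= m + u t) ->
  Rbar_le (liminf_infty g) m.
Proof.
  intros Hu Hg. apply liminf_infty_le. intros e He.
  apply is_lim_spec in Hu. specialize (Hu (mkposreal e He)).
  generalize (filter_and _ _ Hu Hg). apply filter_imp. intros t [Hut Hgt]. simpl in Hut.
  rewrite Rminus_0_r in Hut. pose proof (Rle_abs (u t)). lra.
Qed.

(** * The cutoff function *)

Definition glue (a : R) (g k : R -> R) (x : R) : R := if Rle_dec x a then g x else k x.

Lemma glue_near_left a g k x : x < a -> locally x (fun y => g y = glue a g k y).
Proof.
  intros Hx. exists (mkposreal (a - x) ltac:(lra)). intros y Hy.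
  change (Rabs (y - x) < a - x) in Hy. pose proof (Rle_abs (y - x)).
  unfold glue. destruct (Rle_dec y a); [reflexivity|lra].
Qed.

Lemma glue_near_right a g k x : a < x -> locally x (fun y => k y = glue a g k y).
Proof.
  intros Hx. exists (mkposreal (x - a) ltac:(lra)). intros y Hy.
  change (Rabs (y - x) < x - a) in Hy. pose proof (Rle_abs (- (y - x))). rewrite Rabs_Ropp in *.
  unfold glue. destruct (Rle_dec y a); [lra|reflexivity].
Qed.

Lemma is_derive_glue a g k g' k' :
  (forall x, is_derive g x (g' x)) -> (forall x, is_derive k x (k' x)) ->
  g a = k a -> g' a = k' a ->
  forall x, is_derive (glue a g k) x (glue a g' k' x).
Proof.
  intros Hg Hk E E' x.
  destruct (Rtotal_order x a) as [Hx|[->|Hx]].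
  - unfold glue at 2. destruct (Rle_dec x a); [|lra].
    eapply is_derive_ext_loc; [apply glue_near_left, Hx|apply Hg].
  - unfold glue at 2. destruct (Rle_dec a a) as [_|C]; [|lra].
    apply is_derive_Reals. intros e He.
    destruct (proj1 (is_derive_Reals _ _ _) (Hg a) e He) as [d1 H1].
    destruct (proj1 (is_derive_Reals _ _ _) (Hk a) e He) as [d2 H2].
    exists (mkposreal _ (Rmin_pos _ _ (cond_pos d1) (cond_pos d2))). intros h Hh0 Hh. simpl in Hh.
    pose proof (Rmin_l d1 d2). pose proof (Rmin_r d1 d2).
    unfold glue. destruct (Rle_dec a a) as [_|C]; [|lra].
    destruct (Rle_dec (a + h) a).
    + apply H1; [exact Hh0|lra].
    + rewrite E, E'. apply H2; [exact Hh0|lra].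
  - unfold glue at 2. destruct (Rle_dec x a); [lra|].
    eapply is_derive_ext_loc; [apply glue_near_right, Hx|apply Hk].
Qed.

Lemma continuous_glue a g k : (forall x, continuous g x) -> (forall x, continuous k x) ->
  g a = k a -> forall x, continuous (glue a g k) x.
Proof.
  intros Hg Hk E x.
  destruct (Rtotal_order x a) as [Hx|[->|Hx]].
  - eapply continuous_ext_loc; [apply glue_near_left, Hx|apply Hg].
  - apply filterlim_locally. intros e.
    destruct (proj1 (filterlim_locally _ _) (Hg a) e) as [d1 H1].
    destruct (proj1 (filterlim_locally _ _) (Hk a) e) as [d2 H2].
    exists (mkposreal _ (Rmin_pos _ _ (cond_pos d1) (cond_pos d2))). intros y Hy.
    change (Rabs (y - a) < Rmin d1 d2) in Hy. pose proof (Rmin_l d1 d2). pose proof (Rmin_r d1 d2).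
    unfold glue. destruct (Rle_dec a a) as [_|C]; [|lra].
    destruct (Rle_dec y a).
    + apply H1. change (Rabs (y - a) < d1). lra.
    + rewrite E. apply H2. change (Rabs (y - a) < d2). lra.
  - eapply continuous_ext_loc; [apply glue_near_right, Hx|apply Hk].
Qed.

Lemma exp_opp_mul_1_add_le v : 0 <= v -> exp (- v) * (1 + v) <= 1.
Proof.
  intros Hv. pose proof (exp_ineq1_le v). pose proof (exp_pos (- v)).
  assert (exp (- v) * exp v = 1) by (rewrite <- exp_plus, Rplus_opp_l; apply exp_0).
  nra.
Qed.

Lemma exp_opp_mul_sqr_le v : 0 <= v -> exp (- v) * (1 + v / 2) ^ 2 <= 1.
Proof.
  intros Hv. pose proof (exp_ineq1_le (v / 2)). pose proof (exp_pos (- v)).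
  assert (exp (- v) * (exp (v / 2) * exp (v / 2)) = 1).
  { rewrite <- !exp_plus. replace (- v + (v / 2 + v / 2)) with 0 by field. apply exp_0. }
  assert ((1 + v / 2) ^ 2 <= exp (v / 2) * exp (v / 2)) by nra.
  nra.
Qed.

Section Cutoff.
Variable L0 : R.

Definition damp x := L0 + (x - L0) * exp (- (x - L0) ^ 2).
Definition damp_d1 x := exp (- (x - L0) ^ 2) * (1 - 2 * (x - L0) ^ 2).
Definition damp_d2 x := exp (- (x - L0) ^ 2) * (4 * (x - L0) ^ 3 - 6 * (x - L0)).

Definition cutoff := glue L0 (fun x => x) damp.
Definition cutoff_d1 := glue L0 (fun _ => 1) damp_d1.
Definition cutoff_d2 := glue L0 (fun _ => 0) damp_d2.

Lemma is_derive_cutoff x : is_derive cutoff x (cutoff_d1 x).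
Proof.
  apply is_derive_glue.
  - intros y. auto_derive; [exact I|ring].
  - intros y. unfold damp, damp_d1. auto_derive; [exact I|].
    replace (- ((y + - L0) * ((y + - L0) * 1))) with (- (y - L0) ^ 2) by ring. ring.
  - unfold damp. rewrite Rminus_diag. simpl. ring.
  - unfold damp_d1. rewrite Rminus_diag, pow_i, Ropp_0, exp_0 by lia. simpl. ring.
Qed.

Lemma is_derive_cutoff_d1 x : is_derive cutoff_d1 x (cutoff_d2 x).
Proof.
  apply is_derive_glue.
  - intros y. auto_derive; [exact I|ring].
  - intros y. unfold damp_d1, damp_d2. auto_derive; [exact I|].
    replace (- ((y + - L0) * ((y + - L0) * 1))) with (- (y - L0) ^ 2) by ring. ring.
  - unfold damp_d1. rewrite Rminus_diag, pow_i, Ropp_0, exp_0 by lia. simpl. ring.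
  - unfold damp_d2. rewrite Rminus_diag. simpl. ring.
Qed.

Lemma continuous_cutoff_d2 x : continuous cutoff_d2 x.
Proof.
  apply continuous_glue.
  - intros y. apply continuous_const.
  - intros y. apply (ex_derive_continuous damp_d2). unfold damp_d2. auto_derive. exact I.
  - unfold damp_d2. rewrite Rminus_diag. simpl. ring.
Qed.

Lemma cutoff_id x : x <= L0 -> cutoff x = x.
Proof. intros Hx. unfold cutoff, glue. destruct (Rle_dec x L0); [reflexivity|lra]. Qed.

Lemma cutoff_damp x : L0 < x -> cutoff x = damp x.
Proof. intros Hx. unfold cutoff, glue. destruct (Rle_dec x L0); [lra|reflexivity]. Qed.

Lemma exp_damp_le x : exp (- (x - L0) ^ 2) * (1 + (x - L0) ^ 2) <= 1.
Proof. apply exp_opp_mul_1_add_le, pow2_ge_0. Qed.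

Ltac damp_facts x :=
  pose proof (exp_damp_le x); pose proof (exp_pos (- (x - L0) ^ 2));
  set (u := x - L0) in *; set (e := exp (- u ^ 2)) in *.

Lemma cutoff_gt x : L0 < x -> L0 < cutoff x.
Proof.
  intros Hx. rewrite cutoff_damp by exact Hx. unfold damp. damp_facts x.
  assert (0 < u) by (unfold u; lra). nra.
Qed.

Lemma cutoff_le x : cutoff x <= x.
Proof.
  destruct (Rle_dec x L0) as [Hx|Hx]; [rewrite cutoff_id; lra|].
  rewrite cutoff_damp by lra. unfold damp. damp_facts x.
  assert (0 < u) by (unfold u; lra). assert (u * e <= u) by nra.
  unfold u in *. lra.
Qed.

Lemma cutoff_le_bound x : cutoff x <= L0 + 1.
Proof.
  destruct (Rle_dec x L0) as [Hx|Hx]; [rewrite cutoff_id; lra|].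
  rewrite cutoff_damp by lra. unfold damp. damp_facts x. nra.
Qed.

Lemma abs_cutoff_d1_le x : Rabs (cutoff_d1 x) <= 2.
Proof.
  unfold cutoff_d1, glue. destruct (Rle_dec x L0); [rewrite Rabs_R1; lra|].
  unfold damp_d1. damp_facts x. apply Rabs_le. split; nra.
Qed.

Lemma abs_one_minus_cutoff_d1_le x : Rabs (1 - cutoff_d1 x) <= 3.
Proof.
  pose proof (Rabs_triang 1 (- cutoff_d1 x)). rewrite Rabs_Ropp, Rabs_R1 in *.
  pose proof (abs_cutoff_d1_le x). unfold Rminus. lra.
Qed.

Lemma abs_cutoff_d2_le x : Rabs (cutoff_d2 x) <= 20.
Proof.
  unfold cutoff_d2, glue. destruct (Rle_dec x L0); [rewrite Rabs_R0; lra|].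
  unfold damp_d2. set (u := x - L0). set (e := exp (- u ^ 2)).
  assert (He0 : 0 < e) by apply exp_pos.
  assert (He : e * (1 + u ^ 2 / 2) ^ 2 <= 1) by (apply exp_opp_mul_sqr_le; nra).
  assert (Rabs (4 * u ^ 3 - 6 * u) <= 20 * (1 + u ^ 2 / 2) ^ 2) by (apply Rabs_le; split; nra).
  rewrite Rabs_mult, (Rabs_right e) by lra. nra.
Qed.

Hypothesis HL0 : 1 <= L0.

Lemma cutoff_pos x : 0 < x -> 0 < cutoff x.
Proof.
  intros Hx. destruct (Rle_dec x L0) as [Hle|Hgt].
  - rewrite cutoff_id; assumption.
  - pose proof (cutoff_gt x). lra.
Qed.

Lemma ln_cutoff_ge x : 0 < x -> - x <= ln (cutoff x) - ln x.
Proof.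
  intros Hx. destruct (Rle_dec x L0) as [Hle|Hgt]; [rewrite cutoff_id; lra|].
  pose proof (cutoff_gt x ltac:(lra)).
  assert (0 < ln (cutoff x)) by (rewrite <- ln_1; apply ln_increasing; lra).
  assert (ln x <= x - 1) by (pose proof (exp_ineq1_le (ln x)); rewrite exp_ln in *; lra).
  lra.
Qed.

End Cutoff.

Lemma RInt_abs_mul_ge0 u M t : cont_on u -> cont_on M ->
  (forall s, 0 <= s -> 0 < M s) -> 0 <= t -> 0 <= RInt (fun s => Rabs (u s) * M s) 0 t.
Proof.
  intros Hu HM HMpos Ht. apply RInt_ge0_on; [lra|exact Ht|solve_cont_on|].
  intros s Hs. pose proof (HMpos s ltac:(lra)). pose proof (Rabs_pos (u s)). nra.
Qed.

Lemma E_fun_ge0 g1 g2 M M1 M2 t : cont_on g2 -> cont_on M -> cont_on M2 ->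
  (forall s, 0 <= s -> 0 < M s) -> 0 <= t -> 0 <= E_fun g1 g2 M M1 M2 t.
Proof.
  intros Hg2 HM HM2 HMpos Ht. unfold E_fun.
  pose proof (RInt_abs_mul_ge0 g2 M t Hg2 HM HMpos Ht).
  pose proof (RInt_abs_mul_ge0 M2 M t HM2 HM HMpos Ht).
  pose proof (HMpos t Ht). pose proof (Rabs_pos (g1 t)). pose proof (Rabs_pos (M1 t)). nra.
Qed.

Lemma is_lim_inv_p_infty : is_lim (fun t => / t) p_infty 0.
Proof. apply (is_lim_inv (fun t => t) p_infty p_infty); [apply is_lim_id|discriminate]. Qed.

Lemma is_lim_ratio_of_affine_bound (e e' : R -> R) C D :
  is_lim (fun t => e t / t) p_infty 0 ->
  (forall t, 0 <= t -> 0 <= e' t <= C * e t + D) ->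
  is_lim (fun t => e' t / t) p_infty 0.
Proof.
  intros He Hbound.
  apply (is_lim_le_le_loc (fun _ => 0) (fun t => C * (e t / t) + D * / t)).
  - exists 0. intros t Ht. specialize (Hbound t ltac:(lra)).
    replace (C * (e t / t) + D * / t) with ((C * e t + D) / t) by (field; lra).
    split; [apply Rdiv_le_0_compat; lra|].
    apply Rmult_le_compat_r; [left; apply Rinv_0_lt_compat|]; lra.
  - apply is_lim_const.
  - replace (Finite 0) with (Finite (C * 0 + D * 0)) by (f_equal; ring).
    apply is_lim_plus';
      [exact (is_lim_scal_l _ C _ _ He)|exact (is_lim_scal_l _ D _ _ is_lim_inv_p_infty)].
Qed.

Definition S_integrand (r : R) (g1 M M1 : R -> R) (s : R) : R :=
  r - / 2 * (g1 s) ^ 2 - PI ^ 2 / (8 * (M s) ^ 2) + M1 s / (2 * M s).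

Lemma S_val_liminf r g1 M M1 :
  S_val r g1 M M1 = liminf_infty (fun t => / t * RInt (S_integrand r g1 M M1) 0 t).
Proof. reflexivity. Qed.

Lemma cont_on_S_integrand r g1 M M1 : (forall s, 0 <= s -> 0 < M s) ->
  cont_on g1 -> cont_on M -> cont_on M1 -> cont_on (S_integrand r g1 M M1).
Proof.
  intros HM Hg1 HcM HM1.
  assert (HM8 : forall s, 0 <= s -> 8 * M s ^ 2 <> 0) by (intros s Hs; specialize (HM s Hs); nra).
  assert (HM2 : forall s, 0 <= s -> 2 * M s <> 0) by (intros s Hs; specialize (HM s Hs); lra).
  unfold S_integrand. solve_cont_on.
Qed.

Lemma deriv_on_ln M M1 : (forall t, 0 <= t -> 0 < M t) -> deriv_on M M1 ->
  deriv_on (fun s => ln (M s)) (fun s => / M s * M1 s).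
Proof. intros HM. apply (deriv_on_comp ln Rinv). intros t Ht. apply is_derive_ln, HM, Ht. Qed.

Lemma RInt_S_integrand_le r g1 M M1 t :
  (forall s, 0 <= s -> 0 < M s) -> deriv_on M M1 -> cont_on g1 -> cont_on M1 -> 0 <= t ->
  RInt (S_integrand r g1 M M1) 0 t <= r * t + / 2 * (ln (M t) - ln (M 0)).
Proof.
  intros HM HdM Hg1 HM1 Ht. pose proof (deriv_on_cont_on _ _ HdM) as HcM.
  assert (HM0 : forall s, 0 <= s -> M s <> 0) by (intros s Hs; specialize (HM s Hs); lra).
  eapply Rle_trans.
  { apply (RInt_le_on _ _ (Rle_refl 0) Ht _ (fun s => r + / 2 * (/ M s * M1 s)));
      [apply cont_on_S_integrand; assumption|solve_cont_on|].
    intros s Hs. unfold S_integrand. specialize (HM s ltac:(lra)).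
    assert (0 <= PI ^ 2 / (8 * M s ^ 2)) by (apply Rdiv_le_0_compat; nra).
    replace (M1 s / (2 * M s)) with (/ 2 * (/ M s * M1 s)) by (field; lra). nra. }
  rewrite RInt_plus_on, RInt_const_R, RInt_scal_on,
    (RInt_deriv_on _ _ 0 t (deriv_on_ln _ _ HM HdM));
    try lra; solve_cont_on.
Qed.

(** * Smoothing the pair (f, L) *)

Section Smoothing.
Variables (r S L0 : R) (f L f1 f2 L1 L2 : R -> R).
Hypothesis HLpos : forall t, 0 <= t -> 0 < L t.
Hypotheses (Hf : deriv_on f f1) (Hf1 : deriv_on f1 f2) (Hf2 : cont_on f2).
Hypotheses (HL : deriv_on L L1) (HL1 : deriv_on L1 L2) (HL2 : cont_on L2).
Hypothesis HE : E_vanishes f1 f2 L L1 L2.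
Hypothesis HS : S_val r f1 L L1 = Finite S.
Hypothesis HL0 : 1 <= L0.
Hypothesis HL0S : PI ^ 2 / (8 * L0 ^ 2) <= S / 2.

Let Lt s := cutoff L0 (L s).
Let Lt1 s := cutoff_d1 L0 (L s) * L1 s.
Let Lt2 s := cutoff_d2 L0 (L s) * L1 s * L1 s + cutoff_d1 L0 (L s) * L2 s.
Let ft s := f s + L s - Lt s.
Let ft1 s := f1 s + L1 s - Lt1 s.
Let ft2 s := f2 s + L2 s - Lt2 s.

Lemma deriv_on_Lt : deriv_on Lt Lt1.
Proof.
  apply (deriv_on_comp (cutoff L0) (cutoff_d1 L0)); [intros; apply is_derive_cutoff|exact HL].
Qed.

Lemma deriv_on_cutoff_d1_L :
  deriv_on (fun s => cutoff_d1 L0 (L s)) (fun s => cutoff_d2 L0 (L s) * L1 s).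
Proof.
  apply (deriv_on_comp (cutoff_d1 L0) (cutoff_d2 L0));
    [intros; apply is_derive_cutoff_d1|exact HL].
Qed.

Lemma deriv_on_Lt1 : deriv_on Lt1 Lt2.
Proof. apply deriv_on_mult; [exact deriv_on_cutoff_d1_L|exact HL1]. Qed.

Lemma deriv_on_ft : deriv_on ft ft1.
Proof. apply deriv_on_minus; [apply deriv_on_plus; assumption|exact deriv_on_Lt]. Qed.

Lemma deriv_on_ft1 : deriv_on ft1 ft2.
Proof. apply deriv_on_minus; [apply deriv_on_plus; assumption|exact deriv_on_Lt1]. Qed.

Ltac regularity :=
  pose proof (deriv_on_cont_on _ _ HL); pose proof (deriv_on_cont_on _ _ HL1);
  pose proof (deriv_on_cont_on _ _ Hf1); pose proof (deriv_on_cont_on _ _ deriv_on_Lt);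
  pose proof (deriv_on_cont_on _ _ deriv_on_Lt1); pose proof (deriv_on_cont_on _ _ deriv_on_ft1);
  pose proof (deriv_on_cont_on _ _ deriv_on_cutoff_d1_L).

Lemma cont_on_Lt2 : cont_on Lt2.
Proof.
  regularity.
  assert (cont_on (fun s => cutoff_d2 L0 (L s)))
    by (apply cont_on_comp; [intros; apply continuous_cutoff_d2|assumption]).
  unfold Lt2. solve_cont_on.
Qed.

Lemma cont_on_ft2 : cont_on ft2.
Proof. pose proof cont_on_Lt2. unfold ft2. solve_cont_on. Qed.

Lemma Lt_pos s : 0 <= s -> 0 < Lt s.
Proof. intros Hs. apply cutoff_pos, HLpos, Hs. exact HL0. Qed.

Lemma Lt_le_L s : Lt s <= L s.
Proof. apply cutoff_le. Qed.

Lemma Lt_le_bound s : Lt s <= L0 + 1.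
Proof. apply cutoff_le_bound. Qed.

Lemma L_neq0 s : 0 <= s -> L s <> 0.
Proof. intros Hs. specialize (HLpos s Hs). lra. Qed.

Lemma Lt_neq0 s : 0 <= s -> Lt s <> 0.
Proof. intros Hs. specialize (Lt_pos s Hs). lra. Qed.

Let K := 20 * (L0 + 1).

Lemma abs_ft1_Lt_le s : 0 <= s ->
  Rabs (ft1 s) * Lt s <= Rabs (f1 s) * L s + 3 * (Rabs (L1 s) * L s).
Proof.
  intros Hs. pose proof (Lt_pos s Hs). pose proof (Lt_le_L s).
  assert (Rabs (ft1 s) <= Rabs (f1 s) + 3 * Rabs (L1 s)).
  { unfold ft1, Lt1.
    replace (f1 s + L1 s - cutoff_d1 L0 (L s) * L1 s)
      with (f1 s + (1 - cutoff_d1 L0 (L s)) * L1 s) by ring.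
    eapply Rle_trans; [apply Rabs_triang|]. rewrite Rabs_mult.
    apply Rplus_le_compat_l, Rmult_le_compat_r;
      [apply Rabs_pos|apply abs_one_minus_cutoff_d1_le]. }
  assert (Rabs (ft1 s) * Lt s <= (Rabs (f1 s) + 3 * Rabs (L1 s)) * Lt s)
    by (apply Rmult_le_compat_r; lra).
  pose proof (Rabs_pos (f1 s)). pose proof (Rabs_pos (L1 s)). nra.
Qed.

Lemma abs_ft2_Lt_le s : 0 <= s ->
  Rabs (ft2 s) * Lt s <= Rabs (f2 s) * L s + 3 * (Rabs (L2 s) * L s) + K * L1 s ^ 2.
Proof.
  intros Hs. pose proof (Lt_pos s Hs). pose proof (Lt_le_L s). pose proof (Lt_le_bound s).
  pose proof (pow2_ge_0 (L1 s)).
  assert (Rabs (ft2 s) <= Rabs (f2 s) + 3 * Rabs (L2 s) + 20 * L1 s ^ 2).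
  { unfold ft2, Lt2.
    replace (f2 s + L2 s - (cutoff_d2 L0 (L s) * L1 s * L1 s + cutoff_d1 L0 (L s) * L2 s))
      with (f2 s + (1 - cutoff_d1 L0 (L s)) * L2 s + - (cutoff_d2 L0 (L s) * L1 s ^ 2)) by ring.
    eapply Rle_trans; [apply Rabs_triang|]. rewrite Rabs_Ropp.
    eapply Rle_trans; [apply Rplus_le_compat_r, Rabs_triang|].
    rewrite !Rabs_mult, (Rabs_right (L1 s ^ 2)) by lra.
    pose proof (abs_one_minus_cutoff_d1_le L0 (L s)). pose proof (abs_cutoff_d2_le L0 (L s)).
    pose proof (Rabs_pos (L2 s)). nra. }
  assert (Rabs (ft2 s) * Lt s <= (Rabs (f2 s) + 3 * Rabs (L2 s) + 20 * L1 s ^ 2) * Lt s)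
    by (apply Rmult_le_compat_r; lra).
  pose proof (Rabs_pos (f2 s)). pose proof (Rabs_pos (L2 s)). unfold K. nra.
Qed.

Lemma abs_Lt1_Lt_le s : 0 <= s -> Rabs (Lt1 s) * Lt s <= 2 * (Rabs (L1 s) * L s).
Proof.
  intros Hs. pose proof (Lt_pos s Hs). pose proof (Lt_le_L s).
  pose proof (abs_cutoff_d1_le L0 (L s)).
  pose proof (Rabs_pos (L1 s)). pose proof (Rabs_pos (cutoff_d1 L0 (L s))).
  unfold Lt1. rewrite Rabs_mult.
  assert (Rabs (cutoff_d1 L0 (L s)) * Lt s <= 2 * L s) by nra.
  nra.
Qed.

Lemma abs_Lt2_Lt_le s : 0 <= s -> Rabs (Lt2 s) * Lt s <= K * L1 s ^ 2 + 2 * (Rabs (L2 s) * L s).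
Proof.
  intros Hs. pose proof (Lt_pos s Hs). pose proof (Lt_le_L s). pose proof (Lt_le_bound s).
  pose proof (pow2_ge_0 (L1 s)).
  assert (Rabs (Lt2 s) <= 20 * L1 s ^ 2 + 2 * Rabs (L2 s)).
  { unfold Lt2. eapply Rle_trans; [apply Rabs_triang|].
    replace (cutoff_d2 L0 (L s) * L1 s * L1 s) with (cutoff_d2 L0 (L s) * L1 s ^ 2) by ring.
    rewrite !Rabs_mult, (Rabs_right (L1 s ^ 2)) by lra.
    pose proof (abs_cutoff_d1_le L0 (L s)). pose proof (abs_cutoff_d2_le L0 (L s)).
    pose proof (Rabs_pos (L2 s)). nra. }
  assert (Rabs (Lt2 s) * Lt s <= (20 * L1 s ^ 2 + 2 * Rabs (L2 s)) * Lt s)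
    by (apply Rmult_le_compat_r; lra).
  pose proof (Rabs_pos (L2 s)). unfold K. nra.
Qed.

Let EL t := E_fun f1 f2 L L1 L2 t.
Let I_f2 t := RInt (fun s => Rabs (f2 s) * L s) 0 t.
Let I_L2 t := RInt (fun s => Rabs (L2 s) * L s) 0 t.

Lemma EL_split t : EL t = Rabs (f1 t) * L t + I_f2 t + / 2 * (Rabs (L1 t) * L t) + / 2 * I_L2 t.
Proof. unfold EL, E_fun, I_f2, I_L2. ring. Qed.

Lemma I_f2_ge0 t : 0 <= t -> 0 <= I_f2 t.
Proof. regularity. apply RInt_abs_mul_ge0; assumption. Qed.

Lemma I_L2_ge0 t : 0 <= t -> 0 <= I_L2 t.
Proof. regularity. apply RInt_abs_mul_ge0; assumption. Qed.

Lemma abs_L1_L_le_EL t : 0 <= t -> Rabs (L1 t) * L t <= 2 * EL t.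
Proof.
  intros Ht. rewrite EL_split. pose proof (I_f2_ge0 t Ht). pose proof (I_L2_ge0 t Ht).
  pose proof (HLpos t Ht). pose proof (Rabs_pos (f1 t)). nra.
Qed.

(* Integration by parts: (L1 L)' = L2 L + L1^2. *)
Lemma RInt_L1_sqr_le t : 0 <= t ->
  RInt (fun s => L1 s ^ 2) 0 t <= Rabs (L1 t) * L t + Rabs (L1 0) * L 0 + I_L2 t.
Proof.
  intros Ht. regularity.
  assert (Hparts := RInt_deriv_on (fun s => L1 s * L s) (fun s => L2 s * L s + L1 s * L1 s) 0 t
                      (deriv_on_mult _ _ _ _ HL1 HL) ltac:(solve_cont_on) (Rle_refl 0) Ht).
  eapply Rle_trans.
  { apply (RInt_le_on 0 t (Rle_refl 0) Ht _
      (fun s => (L2 s * L s + L1 s * L1 s) + Rabs (L2 s) * L s));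
      [solve_cont_on|solve_cont_on|].
    intros s Hs. pose proof (HLpos s ltac:(lra)). pose proof (Rle_abs (- L2 s)).
    rewrite Rabs_Ropp in *. nra. }
  rewrite RInt_plus_on, Hparts by (lra || solve_cont_on). fold (I_L2 t).
  pose proof (Rle_abs (L1 t)). pose proof (Rle_abs (- L1 0)). rewrite Rabs_Ropp in *.
  pose proof (HLpos t Ht). pose proof (HLpos 0 (Rle_refl 0)). nra.
Qed.

Lemma E_smoothed_le t : 0 <= t ->
  E_fun ft1 ft2 Lt Lt1 Lt2 t <= (8 + 3 * K) * EL t + 3 / 2 * K * (Rabs (L1 0) * L 0).
Proof.
  intros Ht. regularity. pose proof cont_on_Lt2. pose proof cont_on_ft2.
  set (J := RInt (fun s => L1 s ^ 2) 0 t).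
  assert (Hft2 : RInt (fun s => Rabs (ft2 s) * Lt s) 0 t <= I_f2 t + 3 * I_L2 t + K * J).
  { eapply Rle_trans.
    { apply (RInt_le_on 0 t (Rle_refl 0) Ht _
        (fun s => (Rabs (f2 s) * L s + 3 * (Rabs (L2 s) * L s)) + K * L1 s ^ 2));
        [solve_cont_on|solve_cont_on|].
      intros s Hs. apply abs_ft2_Lt_le. lra. }
    rewrite !RInt_plus_on, !RInt_scal_on by (lra || solve_cont_on). apply Rle_refl. }
  assert (HLt2 : RInt (fun s => Rabs (Lt2 s) * Lt s) 0 t <= K * J + 2 * I_L2 t).
  { eapply Rle_trans.
    { apply (RInt_le_on 0 t (Rle_refl 0) Ht _ (fun s => K * L1 s ^ 2 + 2 * (Rabs (L2 s) * L s)));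
        [solve_cont_on|solve_cont_on|].
      intros s Hs. apply abs_Lt2_Lt_le. lra. }
    rewrite RInt_plus_on, !RInt_scal_on by (lra || solve_cont_on). apply Rle_refl. }
  pose proof (abs_ft1_Lt_le t Ht). pose proof (abs_Lt1_Lt_le t Ht).
  pose proof (RInt_L1_sqr_le t Ht) as HJ. fold J in HJ.
  pose proof (I_f2_ge0 t Ht). pose proof (I_L2_ge0 t Ht).
  pose proof (HLpos t Ht). pose proof (Rabs_pos (f1 t)). pose proof (Rabs_pos (L1 t)).
  assert (HK : 0 < K) by (unfold K; lra).
  assert (K * J <= K * (Rabs (L1 t) * L t + Rabs (L1 0) * L 0 + I_L2 t))
    by (apply Rmult_le_compat_l; lra).
  assert (0 <= K * (Rabs (f1 t) * L t)) by (apply Rmult_le_pos; nra).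
  assert (0 <= K * I_f2 t) by (apply Rmult_le_pos; lra).
  rewrite EL_split. unfold E_fun. nra.
Qed.

Lemma E_smoothed_vanishes : E_vanishes ft1 ft2 Lt Lt1 Lt2.
Proof.
  apply (is_lim_ratio_of_affine_bound EL _ (8 + 3 * K) (3 / 2 * K * (Rabs (L1 0) * L 0)) HE).
  intros t Ht. regularity. split; [|exact (E_smoothed_le t Ht)].
  apply E_fun_ge0; [exact cont_on_ft2|assumption|exact cont_on_Lt2|exact Lt_pos|exact Ht].
Qed.

Lemma L_eventually_le d : 0 < d -> Rbar_locally p_infty (fun t => L t <= 2 * d * t).
Proof.
  intros Hd. regularity.
  destruct (proj2 (is_lim_spec (fun t => EL t / t) p_infty 0) HE (mkposreal (d ^ 2 / 8) ltac:(nra)))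
    as [N HN].
  pose proof (Rmax_l (N + 1) 1). pose proof (Rmax_r (N + 1) 1).
  set (T0 := Rmax (N + 1) 1) in *.
  assert (Hslope : forall s, T0 <= s -> L1 s * L s + L s * L1 s <= d ^ 2 / 2 * s).
  { intros s Hs. specialize (HN s ltac:(lra)). simpl in HN. rewrite Rminus_0_r in HN.
    assert (EL s <= d ^ 2 / 8 * s).
    { pose proof (Rle_abs (EL s / s)).
      apply Rmult_le_reg_r with (/ s); [apply Rinv_0_lt_compat; lra|].
      replace (d ^ 2 / 8 * s * / s) with (d ^ 2 / 8) by (field; lra). unfold Rdiv in *. lra. }
    pose proof (abs_L1_L_le_EL s ltac:(lra)). pose proof (HLpos s ltac:(lra)).
    pose proof (Rle_abs (L1 s)). nra. }
  exists (Rmax T0 (L T0 / d)). intros t Ht.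
  pose proof (Rmax_l T0 (L T0 / d)). pose proof (Rmax_r T0 (L T0 / d)).
  assert (Hsq : L t * L t - L T0 * L T0 <= d ^ 2 / 2 * t * (t - T0)).
  { rewrite <- (RInt_deriv_on (fun s => L s * L s) (fun s => L1 s * L s + L s * L1 s) T0 t
                 (deriv_on_mult _ _ _ _ HL HL)) by (lra || solve_cont_on).
    rewrite <- RInt_const_R.
    apply RInt_le_on; [lra|lra|solve_cont_on|solve_cont_on|].
    intros s Hs. specialize (Hslope s ltac:(lra)). nra. }
  set (c := L T0) in *. assert (Hc : 0 < c) by (apply HLpos; lra).
  assert (Hct : c <= d * t).
  { apply Rmult_le_reg_r with (/ d); [apply Rinv_0_lt_compat; lra|].
    replace (d * t * / d) with t by (field; lra). unfold Rdiv in *. lra. }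
  assert (Hlin : L t <= c + d * t).
  { pose proof (HLpos t ltac:(lra)).
    assert (d ^ 2 / 2 * t * (t - T0) <= d ^ 2 * t ^ 2).
    { assert (0 <= d ^ 2 * t) by (apply Rmult_le_pos; nra). nra. }
    assert (0 <= c * (d * t)) by (apply Rmult_le_pos; nra).
    assert (L t * L t <= (c + d * t) * (c + d * t)) by nra.
    destruct (Rle_dec (L t) (c + d * t)) as [Hle|Hgt]; [exact Hle|].
    assert (0 < d * t) by (apply Rmult_lt_0_compat; lra). nra. }
  lra.
Qed.

Lemma L_div_vanishes : is_lim (fun t => L t / t) p_infty 0.
Proof.
  apply is_lim_spec. intros [e He].
  destruct (L_eventually_le (e / 4) ltac:(lra)) as [T HT].
  exists (Rmax T 1). intros t Ht. simpl.
  pose proof (Rmax_l T 1). pose proof (Rmax_r T 1). specialize (HT t ltac:(lra)).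
  pose proof (HLpos t ltac:(lra)).
  rewrite Rminus_0_r, Rabs_right by (apply Rle_ge, Rdiv_le_0_compat; lra).
  apply Rmult_lt_reg_r with t; [lra|].
  replace (L t / t * t) with (L t) by (field; lra). nra.
Qed.

(* [W] is a primitive of the part of the difference of the S-integrands of the two pairs
   that admits no pointwise bound; its boundary values are controlled by E and by L. *)
Let W s := / 2 * ln (Lt s) - / 2 * ln (L s) - f1 s * (L s - Lt s) - 9 / 2 * (L1 s * L s).
Let W1 s := / 2 * (/ Lt s * Lt1 s) - / 2 * (/ L s * L1 s)
  - (f2 s * (L s - Lt s) + f1 s * (L1 s - Lt1 s)) - 9 / 2 * (L2 s * L s + L1 s * L1 s).

Lemma deriv_on_W : deriv_on W W1.
Proof.
  repeat apply deriv_on_minus; try apply deriv_on_scal.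
  - apply deriv_on_ln; [exact Lt_pos|exact deriv_on_Lt].
  - apply deriv_on_ln; assumption.
  - apply deriv_on_mult; [exact Hf1|apply deriv_on_minus; [exact HL|exact deriv_on_Lt]].
  - apply deriv_on_mult; assumption.
Qed.

Lemma PI_sqr_div_Lt_le s : 0 <= s ->
  PI ^ 2 / (8 * Lt s ^ 2) <= PI ^ 2 / (8 * L s ^ 2) + S / 2.
Proof.
  intros Hs. pose proof (HLpos s Hs).
  assert (0 <= PI ^ 2 / (8 * L s ^ 2)).
  { apply Rdiv_le_0_compat; [apply pow2_ge_0|apply Rmult_lt_0_compat; [lra|apply pow_lt; lra]]. }
  assert (0 <= PI ^ 2 / (8 * L0 ^ 2)).
  { apply Rdiv_le_0_compat; [apply pow2_ge_0|apply Rmult_lt_0_compat; [lra|apply pow_lt; lra]]. }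
  destruct (Rle_dec (L s) L0) as [Hle|Hgt].
  - unfold Lt. rewrite cutoff_id by exact Hle. lra.
  - assert (HLt : L0 < Lt s) by (apply cutoff_gt; lra).
    assert (PI ^ 2 / (8 * Lt s ^ 2) <= PI ^ 2 / (8 * L0 ^ 2)).
    { apply Rmult_le_compat_l; [apply pow2_ge_0|].
      apply Rinv_le_contravar; [apply Rmult_lt_0_compat; [lra|apply pow_lt; lra]|].
      apply Rmult_le_compat_l; [lra|]. apply pow_incr. lra. }
    lra.
Qed.

Lemma S_integrand_smoothed_ge s : 0 <= s ->
  S_integrand r f1 L L1 s - S / 2 - (Rabs (f2 s) * L s + 9 / 2 * (Rabs (L2 s) * L s)) + W1 s
  <= S_integrand r ft1 Lt Lt1 s.
Proof.
  intros Hs. pose proof (HLpos s Hs). pose proof (Lt_pos s Hs). pose proof (Lt_le_L s).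
  pose proof (PI_sqr_div_Lt_le s Hs).
  assert (Hsq : (L1 s - Lt1 s) ^ 2 <= 9 * L1 s ^ 2).
  { unfold Lt1.
    replace (L1 s - cutoff_d1 L0 (L s) * L1 s) with ((1 - cutoff_d1 L0 (L s)) * L1 s) by ring.
    pose proof (abs_one_minus_cutoff_d1_le L0 (L s)).
    pose proof (Rabs_pos (1 - cutoff_d1 L0 (L s))).
    rewrite Rpow_mult_distr, <- (pow2_abs (1 - cutoff_d1 L0 (L s))).
    apply Rmult_le_compat_r; [apply pow2_ge_0|nra]. }
  assert (Hf2L : 0 <= Rabs (f2 s) * L s + f2 s * (L s - Lt s)).
  { pose proof (Rle_abs (- f2 s)). rewrite Rabs_Ropp in *.
    assert (0 <= (Rabs (f2 s) + f2 s) * (L s - Lt s)) by (apply Rmult_le_pos; lra).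
    assert (0 <= Rabs (f2 s) * Lt s) by (apply Rmult_le_pos; [apply Rabs_pos|lra]).
    nra. }
  assert (HL2L : 0 <= Rabs (L2 s) * L s + L2 s * L s).
  { pose proof (Rle_abs (- L2 s)). rewrite Rabs_Ropp in *. nra. }
  unfold S_integrand, W1, ft1.
  replace (Lt1 s / (2 * Lt s)) with (/ 2 * (/ Lt s * Lt1 s)) by (field; lra).
  replace (L1 s / (2 * L s)) with (/ 2 * (/ L s * L1 s)) by (field; lra).
  nra.
Qed.

Lemma RInt_S_integrand_smoothed_ge t : 0 <= t ->
  RInt (S_integrand r f1 L L1) 0 t - S / 2 * t - 9 * EL t - / 2 * L t - Rabs (W 0)
  <= RInt (S_integrand r ft1 Lt Lt1) 0 t.
Proof.
  intros Ht. regularity. pose proof L_neq0. pose proof Lt_neq0.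
  assert (cont_on (S_integrand r f1 L L1)) by (apply cont_on_S_integrand; assumption).
  assert (cont_on (S_integrand r ft1 Lt Lt1))
    by (apply cont_on_S_integrand; [exact Lt_pos|..]; assumption).
  eapply Rle_trans; [|apply (RInt_le_on 0 t (Rle_refl 0) Ht
    (fun s => S_integrand r f1 L L1 s - S / 2
              - (Rabs (f2 s) * L s + 9 / 2 * (Rabs (L2 s) * L s)) + W1 s))];
    [| unfold W1; solve_cont_on | assumption | intros s Hs; apply S_integrand_smoothed_ge; lra].
  rewrite RInt_plus_on, !RInt_minus_on, RInt_const_R, RInt_plus_on, RInt_scal_on,
    (RInt_deriv_on _ _ 0 t deriv_on_W) by (lra || unfold W1; solve_cont_on).
  fold (I_f2 t) (I_L2 t).
  pose proof (I_f2_ge0 t Ht). pose proof (I_L2_ge0 t Ht). rewrite EL_split.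
  pose proof (HLpos t Ht). pose proof (Lt_pos t Ht). pose proof (Lt_le_L t).
  pose proof (ln_cutoff_ge L0 HL0 (L t) (HLpos t Ht)).
  assert (f1 t * (L t - Lt t) <= Rabs (f1 t) * L t).
  { pose proof (Rle_abs (f1 t)).
    assert (0 <= (Rabs (f1 t) - f1 t) * (L t - Lt t)) by (apply Rmult_le_pos; lra).
    assert (0 <= Rabs (f1 t) * Lt t) by (apply Rmult_le_pos; [apply Rabs_pos|lra]).
    nra. }
  assert (L1 t * L t <= Rabs (L1 t) * L t) by (apply Rmult_le_compat_r; [lra|apply Rle_abs]).
  assert (0 <= Rabs (f1 t) * L t) by (apply Rmult_le_pos; [apply Rabs_pos|lra]).
  pose proof (Rle_abs (W 0)). unfold W, Lt in *. lra.
Qed.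

Lemma S_val_smoothed : exists S', S_val r ft1 Lt Lt1 = Finite S' /\ S / 2 <= S'.
Proof.
  assert (Hlow : Rbar_le (S - S / 2) (S_val r ft1 Lt Lt1)).
  { rewrite S_val_liminf.
    apply (liminf_infty_ge_perturbed (fun t => / t * RInt (S_integrand r f1 L L1) 0 t) _
             (fun t => 9 * (EL t / t) + / 2 * (L t / t) + Rabs (W 0) * / t) S (S / 2) HS).
    - replace (Finite 0) with (Finite (9 * 0 + / 2 * 0 + Rabs (W 0) * 0)) by (f_equal; ring).
      apply is_lim_plus'; [apply is_lim_plus'|].
      + exact (is_lim_scal_l (fun t => EL t / t) 9 p_infty 0 HE).
      + exact (is_lim_scal_l _ (/ 2) _ _ L_div_vanishes).
      + exact (is_lim_scal_l _ (Rabs (W 0)) _ _ is_lim_inv_p_infty).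
    - exists 0. intros t Ht. pose proof (RInt_S_integrand_smoothed_ge t ltac:(lra)).
      replace (/ t * RInt (S_integrand r f1 L L1) 0 t - S / 2
               - (9 * (EL t / t) + / 2 * (L t / t) + Rabs (W 0) * / t))
        with (/ t * (RInt (S_integrand r f1 L L1) 0 t - S / 2 * t - 9 * EL t - / 2 * L t
                     - Rabs (W 0))) by (field; lra).
      apply Rmult_le_compat_l; [left; apply Rinv_0_lt_compat|]; lra. }
  assert (Hup : Rbar_le (S_val r ft1 Lt Lt1) r).
  { rewrite S_val_liminf.
    apply (liminf_infty_le_perturbed _
             (fun t => / 2 * (ln (L0 + 1) - ln (Lt 0)) * / t) r).
    - replace (Finite 0) with (Rbar_mult (/ 2 * (ln (L0 + 1) - ln (Lt 0))) 0)
        by (simpl; f_equal; ring).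
      apply is_lim_scal_l, is_lim_inv_p_infty.
    - exists 0. intros t Ht. regularity.
      pose proof (RInt_S_integrand_le r ft1 Lt Lt1 t Lt_pos deriv_on_Lt
                    ltac:(assumption) ltac:(assumption) ltac:(lra)).
      assert (ln (Lt t) <= ln (L0 + 1)) by (apply ln_le; [apply Lt_pos; lra|apply Lt_le_bound]).
      apply Rmult_le_reg_l with t; [lra|].
      rewrite <- Rmult_assoc, Rinv_r, Rmult_1_l by lra.
      replace (t * (r + / 2 * (ln (L0 + 1) - ln (Lt 0)) * / t))
        with (r * t + / 2 * (ln (L0 + 1) - ln (Lt 0))) by (field; lra).
      lra. }
  destruct (S_val r ft1 Lt Lt1) as [S'| |]; simpl in Hlow, Hup; try contradiction.
  exists S'. split; [reflexivity|lra].
Qed.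

Lemma smoothed_pair_usual_conditions :
  (forall t, 0 <= t -> 0 < Lt t) /\
  exists g1 g2 M1 M2 : R -> R,
    C2_on ft g1 g2 /\ C2_on Lt M1 M2 /\ E_vanishes g1 g2 Lt M1 M2 /\
    exists S', S_val r g1 Lt M1 = Finite S' /\ S / 2 <= S'.
Proof.
  split; [exact Lt_pos|]. exists ft1, ft2, Lt1, Lt2.
  split; [|split; [|split]].
  - split; [exact deriv_on_ft|split; [exact deriv_on_ft1|exact cont_on_ft2]].
  - split; [exact deriv_on_Lt|split; [exact deriv_on_Lt1|exact cont_on_Lt2]].
  - exact E_smoothed_vanishes.
  - exact S_val_smoothed.
Qed.

End Smoothing.

Lemma PI_sqr_div_le S L0 : 0 < S -> PI / (2 * sqrt S) <= L0 ->
  PI ^ 2 / (8 * L0 ^ 2) <= S / 2.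
Proof.
  intros HS HL0. pose proof PI_RGT_0.
  assert (Hq : 0 < sqrt S) by (apply sqrt_lt_R0, HS).
  assert (Hqq : sqrt S * sqrt S = S) by (apply sqrt_sqrt; lra).
  assert (HPI : PI <= 2 * sqrt S * L0).
  { apply Rmult_le_compat_l with (r := 2 * sqrt S) in HL0; [|lra].
    replace (2 * sqrt S * (PI / (2 * sqrt S))) with PI in HL0 by (field; lra). exact HL0. }
  assert (0 < L0) by nra.
  assert (PI ^ 2 <= 4 * S * L0 ^ 2) by (rewrite <- Hqq; nra).
  apply Rmult_le_reg_r with (8 * L0 ^ 2); [nra|].
  replace (PI ^ 2 / (8 * L0 ^ 2) * (8 * L0 ^ 2)) with (PI ^ 2) by (field; lra). nra.
Qed.

Theorem lemma7 (r : R) (f L f1 f2 L1 L2 : R -> R) (S : R) :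
  0 < r ->
  (forall t, 0 <= t -> 0 < L t) ->
  f 0 = 0 ->
  C2_on f f1 f2 -> C2_on L L1 L2 ->
  E_vanishes f1 f2 L L1 L2 ->
  S_val r f1 L L1 = Finite S ->
  0 < S ->
  let L0 := Rmax (PI / (2 * sqrt S)) 1 in
  let Lt := fun t => if Rle_dec (L t) L0 then L t
                     else L0 + (L t - L0) * exp (- (L t - L0) ^ 2) in
  let ft := fun t => f t + L t - Lt t in
  (forall t, 0 <= t -> 0 < Lt t) /\
  exists ft1 ft2 Lt1 Lt2 : R -> R,
    C2_on ft ft1 ft2 /\ C2_on Lt Lt1 Lt2 /\
    E_vanishes ft1 ft2 Lt Lt1 Lt2 /\
    exists S' : R, S_val r ft1 Lt Lt1 = Finite S' /\ S / 2 <= S' /\ 0 < S'.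
Proof.
  intros _ HLpos _ [Hf [Hf1 Hf2]] [HL [HL1 HL2]] HE HS HSpos L0 Lt ft.
  assert (HL0 : 1 <= L0) by apply Rmax_r.
  assert (HL0S : PI ^ 2 / (8 * L0 ^ 2) <= S / 2)
    by (apply PI_sqr_div_le; [exact HSpos|apply Rmax_l]).
  destruct (smoothed_pair_usual_conditions r S L0 f L f1 f2 L1 L2
              HLpos Hf Hf1 Hf2 HL HL1 HL2 HE HS HL0 HL0S)
    as [HLt [g1 [g2 [M1 [M2 [Hft [HLt2 [HEt [S' [HS' HS'2]]]]]]]]]].
  split; [exact HLt|]. exists g1, g2, M1, M2.
  split; [exact Hft|split; [exact HLt2|split; [exact HEt|]]].
  exists S'. split; [exact HS'|lra].
Qed.
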